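(* Let $G$ be a finite graph and $k\ge 1$ an integer. Then $G$ contains a clique of size $k$ if and only if, in the canonical adjacency matrix $\mathbf{M}$ of $G$, all entries $\mathbf{M}_{ij}$ with $1\le i<j\le k$ equal $1$.
   Context: For an $n\times n$ adjacency matrix $\mathbf{M}$ of a finite simple graph (with respect to some ordering of its vertices), its bit-string is obtained by concatenating the entries strictly above the diagonal column by column, left to right, reading each column from top to bottom. The canonical adjacency matrix of a graph $G$ is the unique adjacency matrix of $G$ (over all orderings of its vertices) whose bit-string is lexicographically greatest. *)

From mathcomp Require Import all_boot all_algebra.
Set Implicit Arguments. Unset Strict Implicit. Unset Printing Implicit Defensive.

Definition simple_graph (T : finType) (e : rel T) : Prop :=
  symmetric e /\ irreflexive e.

Definition has_clique (T : finType) (e : rel T) (k : nat) : Prop :=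
  exists K : {set T}, #|K| = k /\
    {in K &, forall x y, x != y -> e x y}.

(* Adjacency matrix of the graph w.r.t. the vertex ordering f
   (vertex number i, 0-indexed, is f i). Entry true = 1, false = 0. *)
Definition adjmat (T : finType) (e : rel T) (f : 'I_#|T| -> T) : 'M[bool]_#|T| :=
  \matrix_(i, j) e (f i) (f j).

(* Bit-string: entries strictly above the diagonal, column by column
   (left to right), each column read top to bottom. *)
Definition bitstring (n : nat) (M : 'M[bool]_n) : seq bool :=
  flatten [seq [seq M i j | i <- filter (fun i : 'I_n => (i < j)%N) (enum 'I_n)] | j : 'I_n <- enum 'I_n].

Fixpoint lex_le (s t : seq bool) : bool :=
  match s, t with
  | [::], _ => true
  | _ :: _, [::] => false
  | a :: s', b :: t' => (~~ a && b) || ((a == b) && lex_le s' t')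
  end.

Definition is_adjmat (T : finType) (e : rel T) (M : 'M[bool]_#|T|) : Prop :=
  exists f : 'I_#|T| -> T, bijective f /\ M = adjmat e f.

Definition is_canonical_adjmat (T : finType) (e : rel T) (M : 'M[bool]_#|T|) : Prop :=
  is_adjmat e M /\
  forall M', is_adjmat e M' -> lex_le (bitstring M') (bitstring M).

From mathcomp Require Import all_boot all_algebra.
Set Implicit Arguments. Unset Strict Implicit. Unset Printing Implicit Defensive.

(* Cut the bit-string of an n x n matrix after its first k
   columns: the prefix consists exactly of the entries M i j with i < j < k,
   and it has the same length for every matrix.  Hence the condition of the
   theorem says that this prefix is all ones.
   - If G has a k-clique K, order the vertices so that K comes first; the
     resulting adjacency matrix has an all-ones prefix.  A word of the same
     length that lexicographically dominates an all-ones word is itself all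
     ones, so the canonical matrix also has an all-ones prefix.
   - Conversely, if the prefix of an adjacency matrix is all ones, the first
     k vertices of the corresponding ordering form a k-clique (symmetry of
     the edge relation takes care of the entries below the diagonal). *)

Lemma lex_le_all_true_prefix (s1 s2 t1 t2 : seq bool) :
  size s1 = size t1 -> all id s1 -> lex_le (s1 ++ s2) (t1 ++ t2) -> all id t1.
Proof.
elim: s1 t1 => [|a s1 IH] [|b t1] //= [size_eq] /andP[-> all_s1] /=.
by case/andP=> /eqP <- lex_tail; exact: IH lex_tail.
Qed.

Definition leading_block_true (n k : nat) (N : 'M[bool]_n) : Prop :=
  forall i j : 'I_n, (i < j)%N -> (j < k)%N -> N i j.

Section BitstringPrefix.
Variables (n k : nat).

Definition upper_column (N : 'M[bool]_n) (j : 'I_n) : seq bool :=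
  [seq N i j | i <- filter (fun i : 'I_n => (i < j)%N) (enum 'I_n)].

Definition bitstring_prefix (N : 'M[bool]_n) : seq bool :=
  flatten [seq upper_column N j | j <- take k (enum 'I_n)].
Definition bitstring_suffix (N : 'M[bool]_n) : seq bool :=
  flatten [seq upper_column N j | j <- drop k (enum 'I_n)].

Lemma bitstring_split (N : 'M[bool]_n) :
  bitstring N = bitstring_prefix N ++ bitstring_suffix N.
Proof.
by rewrite /bitstring /bitstring_prefix /bitstring_suffix -flatten_cat -map_cat cat_take_drop.
Qed.

Lemma size_bitstring_prefix (N N' : 'M[bool]_n) :
  size (bitstring_prefix N) = size (bitstring_prefix N').
Proof.
rewrite /bitstring_prefix !size_flatten /shape -!map_comp.
by congr sumn; apply: eq_map => j /=; rewrite /upper_column !size_map.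
Qed.

Lemma bitstring_prefix_all_true (N : 'M[bool]_n) :
  all id (bitstring_prefix N) <-> leading_block_true k N.
Proof.
have in_prefix (j : 'I_n) : (j \in take k (enum 'I_n)) = (j < k)%N.
  by rewrite in_take ?mem_enum // index_enum_ord.
split.
- move=> /allP all_prefix i j lt_ij lt_jk; apply: (all_prefix (N i j)).
  apply/flatten_mapP; exists j; first by rewrite in_prefix.
  by apply/mapP; exists i => //; rewrite mem_filter lt_ij mem_enum.
- move=> block_true; apply/allP => x /flatten_mapP[j j_in /mapP[i i_in ->]].
  rewrite mem_filter in i_in; case/andP: i_in => lt_ij _.
  by apply: block_true; rewrite // -in_prefix.
Qed.

End BitstringPrefix.

Lemma canonical_leading_block (T : finType) (e : rel T) (k : nat)
    (M : 'M[bool]_#|T|) (g : 'I_#|T| -> T) :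
  is_canonical_adjmat e M -> bijective g ->
  leading_block_true k (adjmat e g) -> leading_block_true k M.
Proof.
move=> [_ M_max] g_bij /(bitstring_prefix_all_true k) g_prefix.
have := M_max (adjmat e g) (ex_intro _ g (conj g_bij erefl)).
rewrite !(bitstring_split k) => lex_gM.
apply/(bitstring_prefix_all_true k).
exact: lex_le_all_true_prefix (size_bitstring_prefix k _ _) g_prefix lex_gM.
Qed.

Lemma clique_first_ordering (T : finType) (e : rel T) (k : nat) :
  (1 <= k)%N -> has_clique e k ->
  exists2 g : 'I_#|T| -> T, bijective g & leading_block_true k (adjmat e g).
Proof.
move=> k_pos [K [card_K K_clique]].
have [x0 x0_K] : exists x0, x0 \in K by apply/set0Pn; rewrite -card_gt0 card_K.
pose s := enum K ++ enum (~: K).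
have size_s : size s = #|T| by rewrite size_cat -!cardE cardsC.
have uniq_s : uniq s.
  rewrite cat_uniq !enum_uniq /= andbT.
  by apply/hasPn => x /=; rewrite !mem_enum in_setC.
pose g (i : 'I_#|T|) := nth x0 s i.
have g_inj : injective g.
  by move=> i j /eqP; rewrite nth_uniq ?size_s // => /eqP /val_inj.
have g_K (i : 'I_#|T|) : (i < k)%N -> g i \in K.
  move=> lt_ik; rewrite /g nth_cat -cardE card_K lt_ik.
  by rewrite -mem_enum mem_nth // -cardE card_K.
exists g; first by apply: inj_card_bij => //; rewrite card_ord.
move=> i j lt_ij lt_jk; rewrite mxE.
apply: K_clique; rewrite ?g_K //; first exact: ltn_trans lt_jk.
by apply/eqP => /g_inj eq_ij; rewrite eq_ij ltnn in lt_ij.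
Qed.

Lemma leading_block_clique (T : finType) (e : rel T) (k : nat)
    (f : 'I_#|T| -> T) :
  symmetric e -> bijective f -> (k <= #|T|)%N ->
  leading_block_true k (adjmat e f) -> has_clique e k.
Proof.
move=> e_sym f_bij le_kT block_true.
have f_inj : injective f by exact: bij_inj.
have first_k : [set i : 'I_#|T| | (i < k)%N] = widen_ord le_kT @: [set: 'I_k].
  apply/setP => i; rewrite inE; apply/idP/imsetP.
    by move=> lt_ik; exists (Ordinal lt_ik) => //; apply: val_inj.
  by case=> j _ ->; rewrite /= ltn_ord.
exists (f @: [set i : 'I_#|T| | (i < k)%N]); split.
  rewrite card_imset // first_k card_imset ?cardsT ?card_ord //.
  by move=> a b /(congr1 val) /= /val_inj.
move=> x y /imsetP[i]; rewrite inE => lt_ik ->.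
move=> /imsetP[j]; rewrite inE => lt_jk -> neq_f.
case: (ltngtP i j) => [lt_ij|lt_ji|/val_inj eq_ij].
- by have := block_true i j lt_ij lt_jk; rewrite mxE.
- by have := block_true j i lt_ji lt_ik; rewrite mxE e_sym.
- by rewrite eq_ij eqxx in neq_f.
Qed.

Theorem mainTheorem9 (T : finType) (e : rel T) (k : nat) (M : 'M[bool]_#|T|) :
  simple_graph e -> (1 <= k)%N -> is_canonical_adjmat e M ->
  has_clique e k <->
  ((k <= #|T|)%N /\ forall i j : 'I_#|T|, (i < j)%N -> (j < k)%N -> M i j).
Proof.
move=> [e_sym _] k_pos M_can; split.
- move=> clique_k; split.
    by case: clique_k => K [<- _]; exact: max_card.
  have [g g_bij g_block] := clique_first_ordering k_pos clique_k.
  exact: canonical_leading_block M_can g_bij g_block.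
- case: M_can => [[f [f_bij ->]] _] [le_kT M_block].
  exact: leading_block_clique e_sym f_bij le_kT M_block.
Qed.
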